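(* Let $d\ge1$, let $\{\zeta_i\}_{i=0}^d$ be any scalars, and let $P(x)=\sum_{i=0}^d\frac{(-1)^i\zeta_ix^i}{([i]^!_q)^2}$ be the corresponding Drinfel'd polynomial. Put $\theta_i=q^{2i-d}$ and $\theta^*_i=q^{d-2i}$ for $0\le i\le d$. Then $$\sum_{i=0}^d\eta_{d-i}(\theta_0)\,\eta^*_{d-i}(\theta^*_0)\,\zeta_i=(-1)^d([d]^!_q)^2(q-q^{-1})^{2d}\,P\!\left(\frac{1}{(q-q^{-1})^2}\right).$$
   Context: $\mathcal K$ is a field; $q\in\mathcal K$ is nonzero and not a root of unity; $[i]_q=\frac{q^i-q^{-i}}{q-q^{-1}}$, $[i]^!_q=\prod_{n=1}^i[n]_q$ ($[0]^!_q=1$). For $0\le i\le d$: $\eta_i(x)=(x-\theta_d)(x-\theta_{d-1})\cdots(x-\theta_{d-i+1})$ and $\eta^*_i(x)=(x-\theta^*_d)(x-\theta^*_{d-1})\cdots(x-\theta^*_{d-i+1})$ (empty product $=1$). *)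

From mathcomp Require Import all_boot all_order all_algebra.
Set Implicit Arguments. Unset Strict Implicit. Unset Printing Implicit Defensive.
Import Order.TTheory GRing.Theory Num.Theory.
Local Open Scope ring_scope.

Definition qint (K : fieldType) (q : K) (i : nat) : K :=
  (q ^+ i - q ^- i) / (q - q^-1).

Definition qfact (K : fieldType) (q : K) (i : nat) : K :=
  \prod_(1 <= n < i.+1) qint q n.

Definition eta (K : fieldType) (th : nat -> K) (d i : nat) (x : K) : K :=
  \prod_(0 <= k < i) (x - th (d - k)%N).

Definition thetaq (K : fieldType) (q : K) (d i : nat) : K :=
  q ^ ((2 * i)%:Z - d%:Z).
Definition thetaqs (K : fieldType) (q : K) (d i : nat) : K :=
  q ^ (d%:Z - (2 * i)%:Z).

Definition drinfeld_poly (K : fieldType) (q : K) (d : nat) (zeta : nat -> K)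
  : {poly K} :=
  \sum_(i < d.+1) (((-1) ^+ i * zeta i) / (qfact q i) ^+ 2) *: 'X^i.

From mathcomp Require Import all_boot all_order all_algebra.
From mathcomp Require Import ring.
Import Order.TTheory GRing.Theory Num.Theory.

Set Implicit Arguments.
Unset Strict Implicit.
Unset Printing Implicit Defensive.

Local Open Scope ring_scope.

(* The product eta_{d-i}(theta_0) eta^*_{d-i}(theta^*_0) runs over the pairs
   (theta_0 - theta_n)(theta^*_0 - theta^*_n) = -(q^n - q^-n)^2
   = -(q - q^-1)^2 [n]_q^2 for i < n <= d, so it equals
   (-1)^(d-i) (q - q^-1)^(2(d-i)) ([d]^!_q / [i]^!_q)^2.  This is exactly the
   coefficient of zeta_i in the right-hand side, so the identity holds term by
   term. *)

Section QAnalogues.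

Variables (K : fieldType) (q : K).
Hypothesis q_neq0 : q != 0.
Hypothesis q_not_root1 : forall n : nat, (0 < n)%N -> q ^+ n != 1.

Lemma expfz_subn (a b : nat) : q ^ (a%:Z - b%:Z) = q ^+ a / q ^+ b.
Proof. by rewrite expfzDr // -exprnN -exprnP. Qed.

Lemma subr_exprVn_neq0 (n : nat) : (0 < n)%N -> q ^+ n - q ^- n != 0.
Proof.
move=> n_gt0; have qn_neq0 : q ^+ n != 0 by rewrite expf_neq0.
apply: contra (q_not_root1 (ltn_addr n n_gt0)) => /eqP qdiff0.
by rewrite exprD -subr_eq0 -[X in _ - X](mulfV qn_neq0) -mulrBr qdiff0 mulr0.
Qed.

Lemma subr_invr_neq0 : q - q^-1 != 0.
Proof. by have := @subr_exprVn_neq0 1 isT; rewrite expr1. Qed.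

Lemma subr_invr_mul_qint (n : nat) : (q - q^-1) * qint q n = q ^+ n - q ^- n.
Proof. by rewrite /qint mulrC divfK // subr_invr_neq0. Qed.

Lemma qint_neq0 (n : nat) : (0 < n)%N -> qint q n != 0.
Proof.
by move=> n_gt0; rewrite /qint mulf_neq0 ?invr_eq0 ?subr_invr_neq0 ?subr_exprVn_neq0.
Qed.

Lemma qfact_neq0 (n : nat) : qfact q n != 0.
Proof.
rewrite /qfact prodf_seq_neq0; apply/allP => k.
by rewrite mem_iota => /andP[k_gt0 _]; apply: qint_neq0.
Qed.

Lemma qfact_split (d m : nat) : (m <= d)%N ->
  qfact q d = qfact q (d - m) * \prod_(0 <= k < m) qint q (d - k).
Proof.
elim: m => [_|m IHm lt_md]; first by rewrite subn0 big_geq ?mulr1.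
rewrite IHm ?(ltnW lt_md) // big_nat_recr //= [_ * qint _ _]mulrC mulrA.
by congr (_ * _); rewrite /qfact -(subnSK lt_md) big_nat_recr.
Qed.

Lemma theta_diff_mul (d n : nat) :
  (thetaq q d 0 - thetaq q d n) * (thetaqs q d 0 - thetaqs q d n)
  = - (q ^+ n - q ^- n) ^+ 2.
Proof.
rewrite /thetaq /thetaqs !expfz_subn muln0 expr0 mul2n -addnn exprD.
by field; rewrite !expf_neq0 ?oner_eq0.
Qed.

Lemma eta_theta_mul (d m : nat) :
  eta (thetaq q d) d m (thetaq q d 0) * eta (thetaqs q d) d m (thetaqs q d 0)
  = (-1) ^+ m * (q - q^-1) ^+ (2 * m) * (\prod_(0 <= k < m) qint q (d - k)) ^+ 2.
Proof.
rewrite /eta -big_split /=.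
under eq_bigr do rewrite theta_diff_mul -subr_invr_mul_qint exprMn -mulNr.
by rewrite big_split prodr_const_nat prodrXl subn0 exprM -exprNn.
Qed.

Lemma eta_theta_mul_qfact (d i : nat) : (i <= d)%N ->
  eta (thetaq q d) d (d - i) (thetaq q d 0)
  * eta (thetaqs q d) d (d - i) (thetaqs q d 0)
  = (-1) ^+ (d - i) * (q - q^-1) ^+ (2 * (d - i)) * (qfact q d / qfact q i) ^+ 2.
Proof.
move=> le_id; rewrite eta_theta_mul (qfact_split (leq_subr i d)) subKn //.
by rewrite [qfact q i * _]mulrC mulfK ?qfact_neq0.
Qed.

End QAnalogues.

Theorem lemma8p2 (K : fieldType) (q : K) (hq0 : q != 0)
  (hq : forall n : nat, (0 < n)%N -> q ^+ n != 1)
  (d : nat) (hd : (1 <= d)%N) (zeta : nat -> K) :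
  \sum_(i < d.+1)
     eta (thetaq q d) d (d - i) (thetaq q d 0)
     * eta (thetaqs q d) d (d - i) (thetaqs q d 0) * zeta i
  = (-1) ^+ d * (qfact q d) ^+ 2 * (q - q^-1) ^+ (2 * d)
     * (drinfeld_poly q d zeta).[((q - q^-1) ^+ 2)^-1].
Proof.
have c_neq0 := subr_invr_neq0 hq0 hq.
rewrite /drinfeld_poly horner_sum mulr_sumr; apply: eq_bigr => -[i /=].
rewrite ltnS => le_id _; rewrite hornerZ hornerXn (eta_theta_mul_qfact hq0 hq le_id).
have [m ->] : exists m, d = (m + i)%N by exists (d - i)%N; rewrite subnK.
rewrite addnK mulnDr [(q - q^-1) ^+ (_ + _)]exprD [(-1) ^+ (_ + _)]exprD exprVn -exprM.
(* [field] treats (-1) ^+ i as an atom, so its square is supplied by hand. *)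
rewrite -[LHS]mulr1 -[X in _ * X = _](sqrr_sign K i); field.
by rewrite expf_neq0 // qfact_neq0.
Qed.
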